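(* Let $p\le q$ be positive integers. The complete bipartite graph $K_{p,q}$ is a TRVG with respect to the torus if and only if $p\le 2$ or $(p,q)\in\{(3,3),(3,4),(3,5),(3,6),(4,4)\}$.
   Context: View the torus as an axis-parallel rectangle $[0,W]\times[0,H]$ with opposite sides identified. Horizontal lines $y=c$ and vertical lines $x=c$ are then closed curves on the torus. A graph $G$ is a TRVG with respect to the torus if its vertices can be represented by a collection of pairwise non-overlapping axis-parallel rectangles on this torus (a rectangle may wrap across the identified sides), one per vertex, such that two distinct vertices are adjacent if and only if some horizontal or vertical line of the torus intersects the interiors of both of their rectangles (other rectangles do not block visibility). *)

From Stdlib Require Import Reals ZArith Arith.
Open Scope R_scope.

(* A point of the circle R/(L Z) is represented by any real x.
   The open arc of the circle of length L starting at a, of length l,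
   is { x mod L | a < x < a + l }. *)
Definition in_arc (L a l x : R) : Prop :=
  exists k : Z, a < x + IZR k * L < a + l.

(* An axis-parallel rectangle on the torus R^2/(W Z x H Z):
   x-range is the open arc starting at rx of length rw,
   y-range is the open arc starting at ry of length rh (its interior). *)
Record rect := mkRect { rx : R; ry : R; rw : R; rh : R }.

Definition valid_rect (W H : R) (r : rect) : Prop :=
  0 < rw r < W /\ 0 < rh r < H.

Definition in_interior (W H : R) (r : rect) (x y : R) : Prop :=
  in_arc W (rx r) (rw r) x /\ in_arc H (ry r) (rh r) y.

Definition interiors_overlap (W H : R) (r s : rect) : Prop :=
  exists x y, in_interior W H r x y /\ in_interior W H s x y.

Definition h_visible (H : R) (r s : rect) : Prop :=
  exists c, in_arc H (ry r) (rh r) c /\ in_arc H (ry s) (rh s) c.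

Definition v_visible (W : R) (r s : rect) : Prop :=
  exists c, in_arc W (rx r) (rw r) c /\ in_arc W (rx s) (rw s) c.

Definition TRVG {V : Type} (adj : V -> V -> Prop) : Prop :=
  exists (W H : R) (f : V -> rect),
    0 < W /\ 0 < H /\
    (forall v, valid_rect W H (f v)) /\
    (forall u v, u <> v -> ~ interiors_overlap W H (f u) (f v)) /\
    (forall u v, u <> v ->
       (adj u v <-> (h_visible H (f u) (f v) \/ v_visible W (f u) (f v)))).

Definition Kpq_vertex (p q : nat) : Type :=
  ({i : nat | (i < p)%nat} + {j : nat | (j < q)%nat})%type.

Definition Kpq_adj (p q : nat) (u v : Kpq_vertex p q) : Prop :=
  match u, v with
  | inl _, inr _ => True
  | inr _, inl _ => True
  | _, _ => False
  end.

(* Necessity is a charging argument.  Two rectangles of the same colour class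
   see each other along no line, so on each axis their projections are
   pairwise disjoint arcs.  For an edge ij the projections of the two
   rectangles meet on some axis d, hence the starting point of one of them
   lies in the half-open projection of the other; charge the edge to that
   rectangle and d.  The start of a rectangle lies in at most one of the
   disjoint arcs of the other class, so each of the 2(p+q) pairs
   (vertex, axis) is charged at most once and pq <= 2(p+q).  For p <= q this
   leaves p <= 2, p = 3 with q <= 6, or p = q = 4, and explicit
   representations of K_{2,q}, K_{3,6} and K_{4,4} cover these cases, since
   deleting vertices preserves representability. *)

From Stdlib Require Import Reals Arith.
From Stdlib Require Import Lra Lia ZArith List Permutation Classical.
Import ListNotations.
Open Scope R_scope.

Lemma NoDup_list_prod {A B : Type} (l : list A) (l' : list B) :
  NoDup l -> NoDup l' -> NoDup (list_prod l l').
Proof.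
  intros Hl Hl'; induction Hl as [|x l Hx Hl IH]; simpl; [constructor|].
  apply NoDup_app; [|exact IH|].
  - apply NoDup_map_NoDup_ForallPairs; [|exact Hl'].
    intros b b' _ _ E; now injection E.
  - intros [x' b] Hmap Hprod.
    apply in_map_iff in Hmap as (b' & E & _); injection E as -> _.
    now apply in_prod_iff in Hprod as [? _].
Qed.

Lemma NoDup_rel_pigeonhole {A B : Type} (Rel : A -> B -> Prop)
    (l1 : list A) (l2 : list B) :
  NoDup l1 -> Forall (fun x => Exists (Rel x) l2) l1 ->
  (forall x x' y, In x l1 -> In x' l1 -> Rel x y -> Rel x' y -> x = x') ->
  (length l1 <= length l2)%nat.
Proof.
  intros Hnd Hex Hinj; apply Nat.nlt_ge; intro Hlt.
  destruct (Permutation_pigeonhole_rel Rel Hex Hlt)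
    as (x & x' & l3 & Hperm & y & _ & Rx & Rx').
  assert (Hin : forall z, In z (x :: x' :: l3) -> In z l1)
    by (intros z; apply Permutation_in, Permutation_sym, Hperm).
  apply (Permutation_NoDup Hperm) in Hnd; inversion Hnd as [|? ? Hx _]; subst.
  apply Hx; left; apply (Hinj x' x y); auto; apply Hin; simpl; auto.
Qed.

(** * Arcs on a circle *)

Definition arcs_meet (L a l b m : R) : Prop :=
  exists x, in_arc L a l x /\ in_arc L b m x.

Definition in_half_open_arc (L a l x : R) : Prop :=
  exists k : Z, a <= x + IZR k * L < a + l.

Lemma arcs_meet_sym L a l b m : arcs_meet L a l b m -> arcs_meet L b m a l.
Proof. intros [x [Ha Hb]]; now exists x. Qed.

Lemma arcs_meet_start L a l b m :
  arcs_meet L a l b m -> in_half_open_arc L b m a \/ in_half_open_arc L a l b.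
Proof.
  intros [x [[k1 H1] [k2 H2]]].
  assert (HD : IZR (k2 - k1) * L = IZR k2 * L - IZR k1 * L)
    by (rewrite minus_IZR; ring).
  destruct (Rle_dec b (a + IZR (k2 - k1) * L)).
  - left; exists (k2 - k1)%Z; lra.
  - right; exists (- (k2 - k1))%Z; rewrite opp_IZR; lra.
Qed.

Lemma in_half_open_arc_arcs_meet L a l b m x :
  in_half_open_arc L a l x -> in_half_open_arc L b m x -> arcs_meet L a l b m.
Proof.
  intros [k Hk] [k' Hk'].
  set (ea := a + l - (x + IZR k * L)); set (eb := b + m - (x + IZR k' * L)).
  destruct (Rle_dec ea eb).
  - exists (x + ea / 2); split; [exists k | exists k']; unfold ea, eb in *; lra.
  - exists (x + eb / 2); split; [exists k | exists k']; unfold ea, eb in *; lra.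
Qed.

Definition intervals_meet (a l b m : R) : Prop := a < b + m /\ b < a + l.

(* For arcs normalised to start in [0, L), only the three nearest lifts of
   the second arc can meet the first. *)
Definition cyclic_overlap (L a l b m : R) : Prop :=
  intervals_meet a l (b - L) m \/ intervals_meet a l b m \/
  intervals_meet a l (b + L) m.

Lemma intervals_meet_common a l b m :
  0 < l -> 0 < m -> intervals_meet a l b m ->
  exists x, a < x < a + l /\ b < x < b + m.
Proof.
  intros Hl Hm [H1 H2].
  destruct (Rle_dec a b); destruct (Rle_dec (a + l) (b + m)).
  - exists ((b + (a + l)) / 2); lra.
  - exists ((b + (b + m)) / 2); lra.
  - exists ((a + (a + l)) / 2); lra.
  - exists ((a + (b + m)) / 2); lra.
Qed.

Lemma arcs_meet_iff_cyclic_overlap L a l b m :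
  0 <= a < L -> 0 <= b < L -> 0 < l < L -> 0 < m < L ->
  arcs_meet L a l b m <-> cyclic_overlap L a l b m.
Proof.
  intros Ha Hb Hl Hm; split.
  - intros [x [[k1 H1] [k2 H2]]].
    assert (HK : IZR (k1 - k2) * L = IZR k1 * L - IZR k2 * L)
      by (rewrite minus_IZR; ring).
    assert (Hmeet : intervals_meet a l (b + IZR (k1 - k2) * L) m)
      by (unfold intervals_meet; lra).
    assert (Hlt : IZR (k1 - k2) < 2) by (apply (Rmult_lt_reg_r L); lra).
    assert (Hgt : -2 < IZR (k1 - k2)) by (apply (Rmult_lt_reg_r L); lra).
    apply lt_IZR in Hlt; apply lt_IZR in Hgt.
    assert (HK3 : (k1 - k2 = -1 \/ k1 - k2 = 0 \/ k1 - k2 = 1)%Z) by lia.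
    unfold cyclic_overlap.
    destruct HK3 as [E | [E | E]]; rewrite E in Hmeet; simpl in Hmeet;
      [left | right; left | right; right]; unfold intervals_meet in *; lra.
  - intros [Hi | [Hi | Hi]]; apply intervals_meet_common in Hi as (x & Hx & Hy);
      try lra; exists x; (split; [exists 0%Z; lra|]);
      [exists 1%Z | exists 0%Z | exists (-1)%Z]; simpl; lra.
Qed.

(** * Visibility between rectangles *)

(* A horizontal line sees two rectangles iff their y-projections meet, so
   [d = true] stands for the y-axis; [h_visible] and [v_visible] unfold to
   [arcs_meet]. *)
Definition visible (W H : R) (d : bool) (r s : rect) : Prop :=
  if d then h_visible H r s else v_visible W r s.

Definition start_in (W H : R) (d : bool) (r s : rect) : Prop :=
  if d then in_half_open_arc H (ry s) (rh s) (ry r) else in_half_open_arc W (rx s) (rw s) (rx r).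

Lemma visible_sym W H d r s : visible W H d r s -> visible W H d s r.
Proof. destruct d; apply arcs_meet_sym. Qed.

Lemma h_or_v_visible_iff W H r s :
  h_visible H r s \/ v_visible W r s <-> exists d, visible W H d r s.
Proof.
  split; [intros [Hv | Hv]; [exists true | exists false]; exact Hv|].
  intros [[|] Hv]; [left | right]; exact Hv.
Qed.

Lemma interiors_overlap_iff W H r s :
  interiors_overlap W H r s <-> visible W H false r s /\ visible W H true r s.
Proof.
  split.
  - intros (x & y & [Hrx Hry] & [Hsx Hsy]); split; [exists x | exists y]; auto.
  - intros [[x [Hrx Hsx]] [y [Hry Hsy]]]; exists x, y; split; split; auto.
Qed.

Lemma interiors_overlap_sym W H r s :
  interiors_overlap W H r s -> interiors_overlap W H s r.
Proof.
  rewrite !interiors_overlap_iff; intros [Hx Hy]; split; apply visible_sym; auto.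
Qed.

Lemma visible_start_in W H d r s :
  visible W H d r s -> start_in W H d r s \/ start_in W H d s r.
Proof. destruct d; intros Hv; apply arcs_meet_start in Hv; tauto. Qed.

Lemma start_in_visible W H d r s s' :
  start_in W H d r s -> start_in W H d r s' -> visible W H d s s'.
Proof. destruct d; apply in_half_open_arc_arcs_meet. Qed.

Lemma biclique_visibility_bound (p q : nat) (W H : R) (fA fB : nat -> rect) :
  (forall d i i', (i < p)%nat -> (i' < p)%nat ->
     visible W H d (fA i) (fA i') -> i = i') ->
  (forall d j j', (j < q)%nat -> (j' < q)%nat ->
     visible W H d (fB j) (fB j') -> j = j') ->
  (forall i j, (i < p)%nat -> (j < q)%nat -> exists d, visible W H d (fA i) (fB j)) ->
  (p * q <= 2 * (p + q))%nat.
Proof.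
  intros HA HB HAB.
  set (vertices := map inl (seq 0 p) ++ map inr (seq 0 q) : list (nat + nat)).
  set (charged := fun (e : nat * nat) (s : bool * (nat + nat)) =>
    let (i, j) := e in
    match s with
    | (d, inl i') => i' = i /\ start_in W H d (fA i) (fB j)
    | (d, inr j') => j' = j /\ start_in W H d (fB j) (fA i)
    end).
  assert (Hvert : forall i j, (i < p)%nat -> (j < q)%nat ->
            In (inl i) vertices /\ In (inr j) vertices).
  { intros i j Hi Hj; unfold vertices; rewrite !in_app_iff, !in_map_iff.
    split; [left; exists i | right; exists j]; rewrite in_seq; auto with arith. }
  replace (p * q)%nat with (length (list_prod (seq 0 p) (seq 0 q)))
    by now rewrite length_prod, !length_seq.
  replace (2 * (p + q))%nat with (length (list_prod [true; false] vertices))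
    by (unfold vertices; rewrite length_prod, length_app, !length_map, !length_seq; simpl; lia).
  apply (NoDup_rel_pigeonhole charged).
  - apply NoDup_list_prod; apply seq_NoDup.
  - apply Forall_forall; intros [i j] Hij.
    apply in_prod_iff in Hij as [Hi Hj]; rewrite in_seq in Hi, Hj.
    destruct (HAB i j ltac:(lia) ltac:(lia)) as [d Hd].
    destruct (Hvert i j ltac:(lia) ltac:(lia)) as [Hi' Hj'].
    apply Exists_exists.
    destruct (visible_start_in _ _ _ _ _ Hd);
      [exists (d, inl i) | exists (d, inr j)];
      (split; [apply in_prod_iff; split; [destruct d; simpl|]; auto|]); simpl; auto.
  - intros [i j] [i' j'] [d [k | k]] Hij Hij' [Ek Hs] [Ek' Hs']; subst;
      apply in_prod_iff in Hij as [Hi Hj]; apply in_prod_iff in Hij' as [Hi' Hj'];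
      rewrite in_seq in Hi, Hj, Hi', Hj'.
    + now rewrite (HB d j j' ltac:(lia) ltac:(lia) (start_in_visible _ _ _ _ _ _ Hs Hs')).
    + now rewrite (HA d i i' ltac:(lia) ltac:(lia) (start_in_visible _ _ _ _ _ _ Hs Hs')).
Qed.

(** * Representations of K_{p,q} indexed by natural numbers *)

(* Same-class rectangles cannot overlap: overlapping rectangles see each
   other, which [rep_invisible_A] and [rep_invisible_B] forbid. *)
Record Kpq_rep (p q : nat) (W H : R) (fA fB : nat -> rect) : Prop := {
  rep_W_pos : 0 < W;
  rep_H_pos : 0 < H;
  rep_valid_A : forall i, (i < p)%nat -> valid_rect W H (fA i);
  rep_valid_B : forall j, (j < q)%nat -> valid_rect W H (fB j);
  rep_invisible_A : forall d i i', (i < p)%nat -> (i' < p)%nat ->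
    visible W H d (fA i) (fA i') -> i = i';
  rep_invisible_B : forall d j j', (j < q)%nat -> (j' < q)%nat ->
    visible W H d (fB j) (fB j') -> j = j';
  rep_visible_AB : forall i j, (i < p)%nat -> (j < q)%nat ->
    exists d, visible W H d (fA i) (fB j);
  rep_disjoint_AB : forall i j, (i < p)%nat -> (j < q)%nat ->
    ~ interiors_overlap W H (fA i) (fB j)
}.

Lemma Kpq_rep_bound p q W H fA fB :
  Kpq_rep p q W H fA fB -> (p * q <= 2 * (p + q))%nat.
Proof.
  intros [_ _ _ _ iA iB vAB _]; exact (biclique_visibility_bound p q W H fA fB iA iB vAB).
Qed.

Lemma Kpq_rep_mono p q p' q' W H fA fB :
  (p' <= p)%nat -> (q' <= q)%nat -> Kpq_rep p q W H fA fB -> Kpq_rep p' q' W H fA fB.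
Proof.
  intros Hp Hq [HW HH vA vB iA iB vAB dAB]; constructor; auto;
    intros; [apply vA | apply vB | eapply iA | eapply iB | apply vAB | apply dAB];
    eauto; lia.
Qed.

Lemma exist_lt_eq (n i i' : nat) (Hi : (i < n)%nat) (Hi' : (i' < n)%nat) :
  i = i' -> exist (fun k => (k < n)%nat) i Hi = exist _ i' Hi'.
Proof. intros <-; f_equal; apply le_unique. Qed.

Definition Kpq_left {p q : nat} (f : Kpq_vertex p q -> rect) (i : nat) : rect :=
  match lt_dec i p with
  | left Hi => f (inl (exist _ i Hi))
  | right _ => mkRect 0 0 0 0
  end.

Definition Kpq_right {p q : nat} (f : Kpq_vertex p q -> rect) (j : nat) : rect :=
  match lt_dec j q with
  | left Hj => f (inr (exist _ j Hj))
  | right _ => mkRect 0 0 0 0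
  end.

Lemma Kpq_left_eq p q (f : Kpq_vertex p q -> rect) i (Hi : (i < p)%nat) :
  Kpq_left f i = f (inl (exist _ i Hi)).
Proof.
  unfold Kpq_left; destruct (lt_dec i p) as [Hi' | Hi']; [|contradiction].
  now rewrite (exist_lt_eq p i i Hi' Hi).
Qed.

Lemma Kpq_right_eq p q (f : Kpq_vertex p q -> rect) j (Hj : (j < q)%nat) :
  Kpq_right f j = f (inr (exist _ j Hj)).
Proof.
  unfold Kpq_right; destruct (lt_dec j q) as [Hj' | Hj']; [|contradiction].
  now rewrite (exist_lt_eq q j j Hj' Hj).
Qed.

Lemma TRVG_Kpq_rep p q :
  TRVG (Kpq_adj p q) -> exists W H fA fB, Kpq_rep p q W H fA fB.
Proof.
  intros (W & H & f & HW & HH & Hval & Hov & Hadj).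
  assert (Hinvisible : forall d u v, ~ Kpq_adj p q u v -> visible W H d (f u) (f v) -> u = v).
  { intros d u v Hnadj Hvis; destruct (classic (u = v)) as [|Hne]; [assumption|].
    exfalso; apply Hnadj, (Hadj u v Hne), h_or_v_visible_iff; now exists d. }
  exists W, H, (Kpq_left f), (Kpq_right f); constructor; auto.
  - intros i Hi; rewrite (Kpq_left_eq p q f i Hi); apply Hval.
  - intros j Hj; rewrite (Kpq_right_eq p q f j Hj); apply Hval.
  - intros d i i' Hi Hi'; rewrite (Kpq_left_eq p q f i Hi), (Kpq_left_eq p q f i' Hi').
    intros Hvis; apply Hinvisible in Hvis; [now injection Hvis | intros []].
  - intros d j j' Hj Hj'; rewrite (Kpq_right_eq p q f j Hj), (Kpq_right_eq p q f j' Hj').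
    intros Hvis; apply Hinvisible in Hvis; [now injection Hvis | intros []].
  - intros i j Hi Hj; rewrite (Kpq_left_eq p q f i Hi), (Kpq_right_eq p q f j Hj).
    apply h_or_v_visible_iff, Hadj; [discriminate | exact I].
  - intros i j Hi Hj; rewrite (Kpq_left_eq p q f i Hi), (Kpq_right_eq p q f j Hj).
    apply Hov; discriminate.
Qed.

Definition Kpq_rect {p q : nat} (fA fB : nat -> rect) (v : Kpq_vertex p q) : rect :=
  match v with
  | inl i => fA (proj1_sig i)
  | inr j => fB (proj1_sig j)
  end.

Lemma Kpq_rep_TRVG p q W H fA fB : Kpq_rep p q W H fA fB -> TRVG (Kpq_adj p q).
Proof.
  intros [HW HH vA vB iA iB vAB dAB].
  assert (Hsame : forall d u v, ~ Kpq_adj p q u v ->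
            visible W H d (Kpq_rect fA fB u) (Kpq_rect fA fB v) -> u = v).
  { intros d [[i Hi] | [j Hj]] [[i' Hi'] | [j' Hj']] Hnadj Hvis;
      try (exfalso; now apply Hnadj); simpl in Hvis; f_equal; apply exist_lt_eq; eauto. }
  assert (Hcross : forall u v, Kpq_adj p q u v ->
            (exists d, visible W H d (Kpq_rect fA fB u) (Kpq_rect fA fB v)) /\
            ~ interiors_overlap W H (Kpq_rect fA fB u) (Kpq_rect fA fB v)).
  { intros [[i Hi] | [j Hj]] [[i' Hi'] | [j' Hj']] Hadj; try contradiction; simpl.
    - auto.
    - destruct (vAB i' j Hi' Hj) as [d Hd]; split; [exists d; now apply visible_sym|].
      intros Hov; now apply (dAB i' j Hi' Hj), interiors_overlap_sym. }
  exists W, H, (Kpq_rect fA fB).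
  split; [exact HW|]; split; [exact HH|]; split; [|split].
  - intros [[i Hi] | [j Hj]]; simpl; auto.
  - intros u v Hne Hov; apply interiors_overlap_iff in Hov as [Hx Hy].
    destruct (classic (Kpq_adj p q u v)) as [Hadj | Hnadj].
    + apply (proj2 (Hcross u v Hadj)), interiors_overlap_iff; auto.
    + exact (Hne (Hsame false u v Hnadj Hx)).
  - intros u v Hne; rewrite h_or_v_visible_iff; split.
    + intros Hadj; apply Hcross, Hadj.
    + intros [d Hd]; destruct (classic (Kpq_adj p q u v)) as [Hadj | Hnadj];
        [exact Hadj | exfalso; exact (Hne (Hsame d u v Hnadj Hd))].
Qed.

(** * Explicit representations *)

Definition normal_rect (W H : R) (r : rect) : Prop :=
  0 <= rx r < W /\ 0 <= ry r < H /\ valid_rect W H r.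

Definition axis_overlap (W H : R) (d : bool) (r s : rect) : Prop :=
  if d then cyclic_overlap H (ry r) (rh r) (ry s) (rh s)
  else cyclic_overlap W (rx r) (rw r) (rx s) (rw s).

Lemma visible_iff_axis_overlap W H d r s :
  normal_rect W H r -> normal_rect W H s ->
  visible W H d r s <-> axis_overlap W H d r s.
Proof.
  intros (Hrx & Hry & Hrw & Hrh) (Hsx & Hsy & Hsw & Hsh).
  destruct d; apply arcs_meet_iff_cyclic_overlap; assumption.
Qed.

Lemma Kpq_rep_of_normal p q W H (fA fB : nat -> rect) :
  0 < W -> 0 < H ->
  (forall i, (i < p)%nat -> normal_rect W H (fA i)) ->
  (forall j, (j < q)%nat -> normal_rect W H (fB j)) ->
  (forall d i i', (i < p)%nat -> (i' < p)%nat -> i <> i' ->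
     ~ axis_overlap W H d (fA i) (fA i')) ->
  (forall d j j', (j < q)%nat -> (j' < q)%nat -> j <> j' ->
     ~ axis_overlap W H d (fB j) (fB j')) ->
  (forall i j, (i < p)%nat -> (j < q)%nat ->
     (axis_overlap W H false (fA i) (fB j) \/ axis_overlap W H true (fA i) (fB j)) /\
     ~ (axis_overlap W H false (fA i) (fB j) /\ axis_overlap W H true (fA i) (fB j))) ->
  Kpq_rep p q W H fA fB.
Proof.
  intros HW HH nA nB oA oB oAB.
  constructor; auto.
  - intros i Hi; apply nA, Hi.
  - intros j Hj; apply nB, Hj.
  - intros d i i' Hi Hi' Hvis; destruct (Nat.eq_dec i i') as [|Hne]; [assumption|].
    exfalso; apply (oA d i i' Hi Hi' Hne), visible_iff_axis_overlap; auto.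
  - intros d j j' Hj Hj' Hvis; destruct (Nat.eq_dec j j') as [|Hne]; [assumption|].
    exfalso; apply (oB d j j' Hj Hj' Hne), visible_iff_axis_overlap; auto.
  - intros i j Hi Hj; destruct (proj1 (oAB i j Hi Hj)) as [Hv | Hv];
      [exists false | exists true]; apply visible_iff_axis_overlap; auto.
  - intros i j Hi Hj; rewrite interiors_overlap_iff,
      !(visible_iff_axis_overlap W H) by auto; apply oAB; assumption.
Qed.

Ltac solve_overlaps :=
  lazymatch goal with
  | |- _ /\ _ => split; solve_overlaps
  | |- ~ _ => let Hc := fresh in intro Hc; decompose [and or] Hc; lra
  | |- _ \/ _ => first [left; solve_overlaps | right; solve_overlaps]
  | |- _ => lra
  end.

(* Three 8 x 8 squares on the diagonal of a 24 x 24 torus; each thin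
   rectangle lies inside the projection of one square on one axis and
   straddles the boundary between the two other squares on the other axis. *)
Definition K36_A (i : nat) : rect :=
  match i with
  | 0 => mkRect 2 2 8 8 | 1 => mkRect 10 10 8 8 | _ => mkRect 18 18 8 8
  end.

Definition K36_B (j : nat) : rect :=
  match j with
  | 0 => mkRect 0 13 4 2 | 1 => mkRect 5 16 2 4 | 2 => mkRect 8 21 4 2
  | 3 => mkRect 13 0 2 4 | 4 => mkRect 16 5 4 2 | _ => mkRect 21 8 2 4
  end.

Ltac check_overlaps :=
  unfold normal_rect, valid_rect, axis_overlap, cyclic_overlap, intervals_meet;
  simpl; solve_overlaps.

Lemma TRVG_K36 : TRVG (Kpq_adj 3 6).
Proof.
  apply (Kpq_rep_TRVG 3 6 24 24 K36_A K36_B), Kpq_rep_of_normal; try lra.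
  - intros i Hi; destruct i as [|[|[|i]]]; try lia; check_overlaps.
  - intros j Hj; destruct j as [|[|[|[|[|[|j]]]]]]; try lia; check_overlaps.
  - intros [|] i i' Hi Hi' Hne; destruct i as [|[|[|i]]]; try lia;
      destruct i' as [|[|[|i']]]; try lia; check_overlaps.
  - intros [|] j j' Hj Hj' Hne; destruct j as [|[|[|[|[|[|j]]]]]]; try lia;
      destruct j' as [|[|[|[|[|[|j']]]]]]; try lia; check_overlaps.
  - intros i j Hi Hj; destruct i as [|[|[|i]]]; try lia;
      destruct j as [|[|[|[|[|[|j]]]]]]; try lia; check_overlaps.
Qed.

(* 3 x 3 squares on a 16 x 16 torus; on each axis every square of one class
   straddles the gap between two squares of the other class. *)
Definition K44_A (i : nat) : rect :=
  match i with
  | 0 => mkRect 0 0 3 3 | 1 => mkRect 4 12 3 3 | 2 => mkRect 8 8 3 3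
  | _ => mkRect 12 4 3 3
  end.

Definition K44_B (j : nat) : rect :=
  match j with
  | 0 => mkRect 2 6 3 3 | 1 => mkRect 6 2 3 3 | 2 => mkRect 10 14 3 3
  | _ => mkRect 14 10 3 3
  end.

Lemma TRVG_K44 : TRVG (Kpq_adj 4 4).
Proof.
  apply (Kpq_rep_TRVG 4 4 16 16 K44_A K44_B), Kpq_rep_of_normal; try lra.
  - intros i Hi; destruct i as [|[|[|[|i]]]]; try lia; check_overlaps.
  - intros j Hj; destruct j as [|[|[|[|j]]]]; try lia; check_overlaps.
  - intros [|] i i' Hi Hi' Hne; destruct i as [|[|[|[|i]]]]; try lia;
      destruct i' as [|[|[|[|i']]]]; try lia; check_overlaps.
  - intros [|] j j' Hj Hj' Hne; destruct j as [|[|[|[|j]]]]; try lia;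
      destruct j' as [|[|[|[|j']]]]; try lia; check_overlaps.
  - intros i j Hi Hj; destruct i as [|[|[|[|i]]]]; try lia;
      destruct j as [|[|[|[|j]]]]; try lia; check_overlaps.
Qed.

Definition K2q_A (q i : nat) : rect :=
  match i with
  | 0 => mkRect 0 (INR q) (INR q) 1
  | _ => mkRect (INR q + 1) 0 1 (INR q)
  end.

Definition K2q_B (j : nat) : rect := mkRect (INR j) (INR j) 1 1.

Lemma INR_lt_succ_le (a b : nat) : (a < b)%nat -> INR a + 1 <= INR b.
Proof. intro Hab; rewrite <- S_INR; apply le_INR; exact Hab. Qed.

Lemma TRVG_K2q (q : nat) : (1 <= q)%nat -> TRVG (Kpq_adj 2 q).
Proof.
  intro Hq; apply (le_INR 1) in Hq; simpl in Hq.
  apply (Kpq_rep_TRVG 2 q (INR q + 2) (INR q + 2) (K2q_A q) K2q_B), Kpq_rep_of_normal;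
    try lra.
  - intros i Hi; destruct i as [|[|i]]; try lia; check_overlaps.
  - intros j Hj; pose proof (INR_lt_succ_le _ _ Hj); pose proof (pos_INR j);
      check_overlaps.
  - intros [|] i i' Hi Hi' Hne; destruct i as [|[|i]]; try lia;
      destruct i' as [|[|i']]; try lia; check_overlaps.
  - intros d j j' Hj Hj' Hne.
    pose proof (INR_lt_succ_le _ _ Hj); pose proof (pos_INR j).
    pose proof (INR_lt_succ_le _ _ Hj'); pose proof (pos_INR j').
    assert (Hlt : (j < j' \/ j' < j)%nat) by lia.
    destruct Hlt as [Hlt | Hlt]; apply INR_lt_succ_le in Hlt; destruct d; check_overlaps.
  - intros i j Hi Hj; pose proof (INR_lt_succ_le _ _ Hj); pose proof (pos_INR j);
      destruct i as [|[|i]]; try lia; check_overlaps.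
Qed.

Lemma TRVG_Kpq_mono p q p' q' :
  (p' <= p)%nat -> (q' <= q)%nat -> TRVG (Kpq_adj p q) -> TRVG (Kpq_adj p' q').
Proof.
  intros Hp Hq HT; apply TRVG_Kpq_rep in HT as (W & H & fA & fB & rep).
  exact (Kpq_rep_TRVG _ _ _ _ _ _ (Kpq_rep_mono p q p' q' W H fA fB Hp Hq rep)).
Qed.

Theorem theorem5 (p q : nat) (hp : (1 <= p)%nat) (hpq : (p <= q)%nat) :
  TRVG (Kpq_adj p q) <->
  ((p <= 2)%nat \/
   (p = 3 /\ q = 3)%nat \/ (p = 3 /\ q = 4)%nat \/ (p = 3 /\ q = 5)%nat \/
   (p = 3 /\ q = 6)%nat \/ (p = 4 /\ q = 4)%nat).
Proof.
  split.
  - intros HT; apply TRVG_Kpq_rep in HT as (W & H & fA & fB & rep).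
    pose proof (Kpq_rep_bound p q W H fA fB rep) as Hbound.
    assert (p <= 4)%nat by nia.
    destruct p as [|[|[|[|[|p]]]]]; lia.
  - intros [Hp | [[-> ->] | [[-> ->] | [[-> ->] | [[-> ->] | [-> ->]]]]]].
    + apply (TRVG_Kpq_mono 2 q); [lia | lia | apply TRVG_K2q; lia].
    + apply (TRVG_Kpq_mono 3 6); [lia | lia | exact TRVG_K36].
    + apply (TRVG_Kpq_mono 3 6); [lia | lia | exact TRVG_K36].
    + apply (TRVG_Kpq_mono 3 6); [lia | lia | exact TRVG_K36].
    + exact TRVG_K36.
    + exact TRVG_K44.
Qed.
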